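(* Let $X$ be a continuous random variable with finite support $[a,b]$. For each $n$, let $X_1, \dots, X_n$ be i.i.d. samples from $X$ and let $X_{(1)} \le X_{(2)} \le \dots \le X_{(n)}$ denote their order statistics. Then $E[X_{(k+1)} - X_{(k)}] \to 0$ as $n \to \infty$ uniformly in $k$; that is, for every $\varepsilon > 0$ there exists $N$ such that for all $n > N$ and all $1 \le k \le n-1$, $E[X_{(k+1)} - X_{(k)}] < \varepsilon$. *)

From HB Require Import structures.
From mathcomp Require Import all_boot all_order all_algebra.
From mathcomp Require Import all_classical all_reals all_analysis.
Set Implicit Arguments. Unset Strict Implicit. Unset Printing Implicit Defensive.
Import Order.TTheory GRing.Theory Num.Theory.
Import numFieldNormedType.Exports.
Local Open Scope classical_set_scope.
Local Open Scope ring_scope.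

(* X is a continuous random variable: its distribution has no atoms
   (equivalently its CDF is continuous). *)
Definition continuous_rv d (T : measurableType d) (R : realType)
  (P : probability T R) (X : {RV P >-> R}) : Prop :=
  forall x : R, P (X @^-1` [set x]) = 0%E.

Definition support_is d (T : measurableType d) (R : realType)
  (P : probability T R) (X : {RV P >-> R}) (a b : R) : Prop :=
  P (X @^-1` `[a, b]) = 1%E /\
  forall x : R, a <= x <= b -> forall r : R, 0 < r ->
    (0 < P (X @^-1` ball x r))%E.

Definition mutually_independent d (T : measurableType d) (R : realType)
  (P : probability T R) (n : nat) (Xs : 'I_n -> {RV P >-> R}) : Prop :=
  forall B : 'I_n -> set R, (forall i, measurable (B i)) ->
    P (\bigcap_(i in [set: 'I_n]) (Xs i @^-1` B i)) =
    (\prod_(i < n) P (Xs i @^-1` B i))%E.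

Definition same_law d (T : measurableType d) d' (T' : measurableType d')
  (R : realType) (P : probability T R) (Y : {RV P >-> R})
  (P' : probability T' R) (X : {RV P' >-> R}) : Prop :=
  forall B : set R, measurable B -> P (Y @^-1` B) = P' (X @^-1` B).

Definition iid_sample d (T : measurableType d) d' (T' : measurableType d')
  (R : realType) (P : probability T R) (n : nat) (Xs : 'I_n -> {RV P >-> R})
  (P' : probability T' R) (X : {RV P' >-> R}) : Prop :=
  mutually_independent Xs /\ forall i, same_law (Xs i) X.

(* k-th order statistic (1-indexed): X_(1) <= ... <= X_(n). *)
Definition order_stat d (T : measurableType d) (R : realType)
  (P : probability T R) (n : nat) (Xs : 'I_n -> {RV P >-> R}) (k : nat)
  (w : T) : R :=
  nth 0 (sort <=%R [seq Xs i w | i <- enum 'I_n]) k.-1.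

From HB Require Import structures.
From mathcomp Require Import all_boot all_order all_algebra.
From mathcomp Require Import all_classical all_reals all_analysis.
From mathcomp Require Import measurable_realfun zify lra.
Import Order.TTheory GRing.Theory Num.Theory.
Import numFieldNormedType.Exports.
Local Open Scope classical_set_scope.
Local Open Scope ring_scope.

(* Split [a, b] into m cells of width delta = (b - a) / m and put a ball of
   radius delta / 2 around each of the m + 1 grid points.  If every ball
   contains a sample point, no two consecutive order statistics can be
   2 delta apart; otherwise the spacing is still at most b - a.  Each ball has
   positive probability p_j because [a, b] is the support, so it is missed by
   all n samples with probability (1 - p_j)^n, whence
   E[X_(k+1) - X_(k)] <= 2 delta + (b - a) sum_j (1 - p_j)^n,
   uniformly in k, and both terms are small for m, then n, large. *)

Lemma divr_truncnS_lt {R : archiFieldType} (x eps : R) :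
  0 < eps -> x / (Num.truncn (x / eps)).+1%:R < eps.
Proof.
move=> eps_gt0; have := truncnS_gt (x / eps); rewrite ltr_pdivrMr // => x_lt.
by rewrite ltr_pdivrMr ?ltr0n // mulrC.
Qed.

Lemma cvg_sum_expr {R : archiRealFieldType} {I : finType} (q : I -> R) :
  (forall i, `|q i| < 1) -> \sum_i q i ^+ n @[n --> \oo] --> (0 : R).
Proof.
move=> q_lt1.
rewrite -[X in _ --> X](big1 (index_enum I) xpredT (fun=> 0 : R) (op := +%R)) //.
by apply: (cvg_big add_continuous) => // i _; exact: cvg_expr.
Qed.

Definition grid_cell {R : archiRealFieldType} (a delta : R) (j : nat) : set R :=
  ball (a + j%:R * delta) (delta / 2).

Section sorted_spacing.
Context {R : archiRealFieldType} {s : seq R} {k : nat}.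
Hypotheses (s_sorted : sorted <=%R s) (k_gt0 : (0 < k)%N) (k_lt : (k < size s)%N).

Let pred_k_lt : (k.-1 < size s)%N := leq_ltn_trans (leq_pred k) k_lt.

Let nth_le i j : (i <= j)%N -> (j < size s)%N -> nth 0 s i <= nth 0 s j.
Proof.
move=> ij js; apply: (sorted_leq_nth le_trans lexx) => //.
by rewrite inE (leq_ltn_trans ij).
Qed.

Lemma sorted_spacing_ge0 : nth 0 s k.-1 <= nth 0 s k.
Proof. exact: nth_le (leq_pred k) k_lt. Qed.

Lemma sorted_spacing_le (a b : R) : {in s, forall x, a <= x <= b} ->
  nth 0 s k - nth 0 s k.-1 <= b - a.
Proof.
move=> sab; have /andP[_ hi] := sab _ (mem_nth 0 k_lt).
have /andP[lo _] := sab _ (mem_nth 0 pred_k_lt).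
by rewrite lerB.
Qed.

Lemma sorted_not_between x : x \in s -> x <= nth 0 s k.-1 \/ nth 0 s k <= x.
Proof.
move=> xs; rewrite -(nth_index 0 xs).
have [ik|ki] := leqP (index x s) k.-1; [left; exact: nth_le | right].
by apply: nth_le; rewrite ?index_mem // -(prednK k_gt0).
Qed.

Lemma sorted_spacing_lt_grid (a delta : R) (m : nat) : 0 < delta ->
  {in s, forall x, a <= x <= a + m%:R * delta} ->
  (forall j, (j <= m)%N -> exists2 x, x \in s & grid_cell a delta j x) ->
  nth 0 s k - nth 0 s k.-1 < 2 * delta.
Proof.
move=> delta_gt0 s_in hit.
have /andP[ax _] := s_in _ (mem_nth 0 pred_k_lt).
have /andP[_ ym] := s_in _ (mem_nth 0 k_lt).
set x := nth 0 s k.-1 in ax *; set y := nth 0 s k in ym *.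
rewrite ltNge; apply/negP => gap.
(* the first grid point to the right of [x + delta / 2] lies at least [delta / 2] below [y] *)
set t := (x + delta / 2 - a) / delta.
have t_ge0 : 0 <= t by apply: divr_ge0; lra.
have /andP[tl tu] := truncn_itv t_ge0.
set j := (Num.truncn t).+1.
have t_delta : t * delta = x + delta / 2 - a by rewrite mulfVK ?gt_eqF.
have x_lt : x + delta / 2 < a + j%:R * delta by rewrite -ltrBlDl -ltr_pdivrMr.
have j_le : j%:R <= t + 1 by rewrite /j -addn1 natrD lerD2r.
have le_y : a + j%:R * delta <= y - delta / 2.
  by move: j_le; rewrite -(ler_pM2r delta_gt0) mulrDl mul1r t_delta; lra.
have jm : (j <= m)%N.
  rewrite -(ler_nat R) -(ler_pM2r delta_gt0); lra.
have [z zs] := hit j jm; rewrite /grid_cell -ball_normE /= ltr_norml => /andP[z_lo z_hi].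
by case: (sorted_not_between _ zs); rewrite -/x -/y; lra.
Qed.

End sorted_spacing.

Section integral_bounds.
Context {d} {T : measurableType d} {R : realType}.
Local Open Scope ereal_scope.

(* Unlike [ge0_le_integral], no measurability is required, so expected spacings
   can be bounded without proving the order statistics measurable. *)
Lemma ge0_le_integralT (mu : {measure set T -> \bar R}) (f g : T -> \bar R) :
  (forall x, 0 <= f x) -> (forall x, f x <= g x) ->
  \int[mu]_x f x <= \int[mu]_x g x.
Proof.
move=> f0 fg; rewrite !ge0_integralTE//; last by move=> x; exact: le_trans (fg x).
apply: le_ereal_sup => _ [h hf <-]; exists h => //= x.
exact: le_trans (hf x) (fg x).
Qed.

Lemma integral_indic_combination (P : probability T R) (I : finType)
    (c L : R) (B : I -> set T) (N : set T) :
  (0 <= c)%R -> (0 <= L)%R -> (forall i, measurable (B i)) ->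
  measurable N -> P N = 0 ->
  \int[P]_w ((c + L * \sum_i \1_(B i) w)%:E + +oo * (\1_N w)%:E) =
  c%:E + L%:E * \sum_i P (B i).
Proof.
move=> c0 L0 mB mN PN0.
have mI (A : set T) : measurable A -> measurable_fun setT (fun w => (\1_A w : R)%:E).
  by move=> mA; apply/measurable_EFinP; exact: measurable_indic.
have mS : measurable_fun setT (fun w => (L * \sum_i \1_(B i) w)%R%:E).
  apply/measurable_EFinP; apply: measurable_funM => //.
  by apply: measurable_sum => i; exact: measurable_indic.
have S0 w : (0 <= L * \sum_i \1_(B i) w)%R.
  by rewrite mulr_ge0 // sumr_ge0 // => i _; rewrite indicE.
rewrite ge0_integralD //; last 3 first.
- by move=> w _; rewrite lee_fin addr_ge0.
- by apply/measurable_EFinP; apply: measurable_funD => //; exact/measurable_EFinP.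
- exact: measurable_funeM (mI _ mN).
rewrite ge0_integralZl //; last exact: mI.
have -> : \int[P]_w (\1_N w)%:E = 0 by rewrite integral_indic // setIT.
rewrite mule0 adde0.
under eq_integral do rewrite EFinD.
rewrite ge0_integralD //; last by move=> w _; rewrite lee_fin.
rewrite integral_cst //; congr (_ + _).
  by rewrite -[RHS]mule1; congr (_ * _); exact: probability_setT.
under eq_integral do rewrite EFinM -sumEFin.
rewrite ge0_integralZl_EFin //; last 2 first.
- by move=> w _; rewrite sume_ge0 // => i _; rewrite lee_fin.
- by apply: emeasurable_fun_sum => i; exact: mI.
rewrite ge0_integral_sum //; last by move=> i; exact: mI.
congr (_ * _)%E; apply: eq_bigr => i _.
by rewrite integral_indic // setIT.
Qed.

End integral_bounds.

Lemma norm_fine_probability_setC_lt1 {d} {T : measurableType d} {R : realType}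
    (P : probability T R) (A : set T) :
  measurable A -> (0 < P A)%E -> `|fine (P (~` A))| < 1.
Proof.
move=> mA PA_gt0; rewrite probability_setC //.
have := probability_le1 P mA; move: PA_gt0.
case: (P A) => [r||] //=; rewrite ?lte_fin ?lee_fin => r_gt0 r_le1.
by rewrite ger0_norm ?subr_ge0 // ltrBlDr ltrDl.
Qed.

Lemma continuous_rv_support_lt {d} {T : measurableType d} {R : realType}
    {P : probability T R} {X : {RV P >-> R}} {a b : R} :
  continuous_rv X -> support_is X a b -> a < b.
Proof.
move=> X_atomless [PX _]; case: (ltgtP a b) => // [ba|ab].
  have : X @^-1` `[a, b] = set0.
    apply/seteqP; split => // x /=; rewrite in_itv /= => /andP[xa bx].
    by have := le_trans xa bx; rewrite leNgt ba.
  by move=> empty; move: PX; rewrite empty measure0 => -[] /eqP; rewrite eq_sym oner_eq0.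
by move: PX; rewrite ab set_itv1 X_atomless => -[] /eqP; rewrite eq_sym oner_eq0.
Qed.

Lemma support_grid_cell_gt0 {d} {T : measurableType d} {R : realType}
    {P : probability T R} {X : {RV P >-> R}} {a b : R} (m j : nat) :
  support_is X a b -> a < b -> (0 < m)%N -> (j <= m)%N ->
  (0 < P (X @^-1` grid_cell a ((b - a) / m%:R) j))%E.
Proof.
move=> [_ X_supp] ab m_gt0 jm; set delta := (b - a) / m%:R.
have delta_gt0 : 0 < delta by rewrite divr_gt0 ?ltr0n // subr_gt0.
apply: X_supp; last by rewrite divr_gt0.
have j_le : j%:R * delta <= b - a.
  by rewrite /delta mulrA ler_pdivrMr ?ltr0n // [_ * m%:R]mulrC ler_pM2r ?subr_gt0 ?ler_nat.
have : 0 <= j%:R * delta by rewrite mulr_ge0 // ltW.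
by move=> ?; apply/andP; split; lra.
Qed.

Section iid_sample.
Context {d0} {T0 : measurableType d0} {R : realType} {P0 : probability T0 R}.
Context {X : {RV P0 >-> R}} {d} {T : measurableType d} {P : probability T R}.
Context {n : nat} {Xs : 'I_n -> {RV P >-> R}}.
Hypothesis Xs_iid : iid_sample Xs X.

Lemma iid_sample_bigcap (A : set R) : measurable A ->
  P (\bigcap_(i in [set: 'I_n]) Xs i @^-1` A) = (fine (P0 (X @^-1` A)) ^+ n)%:E.
Proof.
move=> mA; case: Xs_iid => indep law.
have PA : P0 (X @^-1` A) = (fine (P0 (X @^-1` A)))%:E.
  by rewrite fineK // fin_num_measure //; exact: measurable_funPTI.
rewrite (indep (fun=> A)) //; under eq_bigr => i _ do rewrite law // PA.
by rewrite prodEFin prodr_const card_ord.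
Qed.

Variables (a b : R) (m : nat).
Hypotheses (ab : a < b) (m_gt0 : (0 < m)%N).
Let delta := (b - a) / m%:R.
Let cell := grid_cell a delta.
Let m_delta : m%:R * delta = b - a.
Proof. by rewrite mulrC divfK // pnatr_eq0 -lt0n. Qed.
Let inside := \bigcap_(i in [set: 'I_n]) Xs i @^-1` `[a, b].
Let missed j := \bigcap_(i in [set: 'I_n]) Xs i @^-1` ~` cell j.
Let spacing k w := order_stat Xs k.+1 w - order_stat Xs k w.

Let delta_gt0 : 0 < delta.
Proof. by rewrite divr_gt0 ?ltr0n // subr_gt0. Qed.

Lemma spacing_ge0 k w : (1 <= k <= n.-1)%N -> 0 <= spacing k w.
Proof.
move=> /andP[k_gt0 k_lt]; rewrite subr_ge0; apply: sorted_spacing_ge0 => //.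
- by apply: sort_sorted; exact: le_total.
- by rewrite size_sort size_codom card_ord; lia.
Qed.

Lemma spacing_le_missed k w : (1 <= k <= n.-1)%N -> inside w ->
  spacing k w <= 2 * delta + (b - a) * \sum_(j < m.+1) \1_(missed j) w.
Proof.
move=> /andP[k_gt0 k_lt] w_in; rewrite /spacing /order_stat /=.
set s := sort _ _.
have s_sorted : sorted <=%R s by apply: sort_sorted; exact: le_total.
have k_size : (k < size s)%N by rewrite size_sort size_codom card_ord; lia.
have s_in : {in s, forall x, a <= x <= b}.
  by move=> x; rewrite mem_sort => /codomP[i ->]; have := w_in i I; rewrite /= in_itv.
have sum_ge0 : 0 <= \sum_(j < m.+1) \1_(missed j) w :> R.
  by rewrite sumr_ge0 // => j _; rewrite indicE.
have [[j missed_j]|all_hit] := pselect (exists j : 'I_m.+1, missed j w).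
  have sum_ge1 : 1 <= \sum_(j < m.+1) \1_(missed j) w :> R.
    by rewrite (bigD1 j) //= indicE mem_set // lerDl sumr_ge0 // => i _; rewrite indicE.
  have := sorted_spacing_le k_size _ _ s_in.
  have : b - a <= (b - a) * \sum_(j < m.+1) \1_(missed j) w by rewrite ler_peMr // subr_ge0 ltW.
  have := delta_gt0; lra.
have hit j : (j <= m)%N -> exists2 x, x \in s & cell j x.
  move=> jm; apply: contra_notP all_hit => no_hit.
  exists (Ordinal (jm : (j < m.+1)%N)) => i _ /= cell_x; apply: no_hit.
  by exists (Xs i w) => //; rewrite mem_sort; exact: codom_f.
have s_in' : {in s, forall x, a <= x <= a + m%:R * delta}.
  by rewrite m_delta addrC subrK.
have := sorted_spacing_lt_grid s_sorted k_gt0 k_size _ _ _ delta_gt0 s_in' hit.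
have : 0 <= (b - a) * \sum_(j < m.+1) \1_(missed j) w by rewrite mulr_ge0 // subr_ge0 ltW.
lra.
Qed.

Lemma expectation_spacing_le k : P0 (X @^-1` `[a, b]) = 1%E -> (1 <= k <= n.-1)%N ->
  ('E_P[spacing k] <=
   (2 * delta + (b - a) * \sum_(j < m.+1) fine (P0 (X @^-1` ~` cell j)) ^+ n)%:E)%E.
Proof.
move=> PX k_range.
have m_cell j : measurable (cell j) by exact: measurable_ball.
have m_inside : measurable inside.
  by apply: fin_bigcap_measurable => // i _; apply: measurable_funPTI; exact: measurable_itv.
have m_missed j : measurable (missed j).
  by apply: fin_bigcap_measurable => // i _; apply: measurable_funPTI; exact: measurableC.
have P_outside : P (~` inside) = 0%E.
  by rewrite probability_setC // iid_sample_bigcap ?PX /= ?expr1n ?subee //; exact: measurable_itv.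
(* the [+oo] term dominates the unbounded spacing on the null event where
   some sample leaves [a, b] *)
have spacing_bound w : ((spacing k w)%:E <=
    (2 * delta + (b - a) * \sum_(j < m.+1) \1_(missed j) w)%:E + +oo * (\1_(~` inside) w)%:E)%E.
  have [w_in|w_out] := pselect (inside w).
    by rewrite indicE memNset ?mule0 ?adde0 ?lee_fin ?spacing_le_missed.
  by rewrite indicE mem_set // mule1 addey ?leey.
have spacing_ge0E w : (0 <= (spacing k w)%:E)%E by rewrite lee_fin spacing_ge0.
rewrite unlock; apply: le_trans (ge0_le_integralT P _ _ spacing_ge0E spacing_bound) _.
have c_ge0 : 0 <= 2 * delta by rewrite mulr_ge0 // ltW.
have L_ge0 : 0 <= b - a by rewrite subr_ge0 ltW.
rewrite integral_indic_combination //; last exact: measurableC.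
have P_missed j : P (missed j) = (fine (P0 (X @^-1` ~` cell j)) ^+ n)%:E.
  by rewrite iid_sample_bigcap //; exact: measurableC (m_cell j).
under eq_bigr do rewrite P_missed.
by rewrite sumEFin -EFinM -EFinD.
Qed.

End iid_sample.

Theorem theorem2 (R : realType) (d0 : measure_display) (T0 : measurableType d0)
  (P0 : probability T0 R) (X : {RV P0 >-> R}) (a b : R) :
  continuous_rv X -> support_is X a b ->
  forall eps : R, 0 < eps ->
  exists N : nat, forall n : nat, (N < n)%N ->
    forall (d : measure_display) (T : measurableType d) (P : probability T R)
      (Xs : 'I_n -> {RV P >-> R}),
    iid_sample Xs X ->
    forall k : nat, (1 <= k <= n.-1)%N ->
      ('E_P[fun w => (order_stat Xs k.+1 w - order_stat Xs k w)%R] < eps%:E)%E.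
Proof.
move=> X_atomless X_supp eps eps_gt0.
have ab := continuous_rv_support_lt X_atomless X_supp.
have ba_gt0 : 0 < b - a by rewrite subr_gt0.
pose m := (Num.truncn (4 * (b - a) / eps)).+1.
pose delta := (b - a) / m%:R.
have delta_small : 4 * delta < eps by rewrite mulrA divr_truncnS_lt.
have q_lt1 (j : 'I_m.+1) : `|fine (P0 (X @^-1` ~` grid_cell a delta j))| < 1.
  apply: norm_fine_probability_setC_lt1.
    by apply: measurable_funPTI; exact: measurable_ball.
  exact: support_grid_cell_gt0 m j X_supp ab isT (ltn_ord j).
have /cvgr_lt /(_ (eps / (4 * (b - a)))) := cvg_sum_expr _ q_lt1.
move=> /(_ (divr_gt0 eps_gt0 (mulr_gt0 _ ba_gt0))) [] // N _ small_sum.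
exists N => n N_lt d T P Xs Xs_iid k k_range.
apply: le_lt_trans (expectation_spacing_le Xs_iid _ _ m ab _ k X_supp.1 k_range) _ => //.
rewrite lte_fin -/delta.
have := small_sum n (ltnW N_lt); rewrite ltr_pdivlMr ?mulr_gt0 // => sum_small.
lra.
Qed.
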